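(* Let $k\ge 2$ be an integer, let $G$ be a $(k+1)$-regular graph, and suppose that $S_0$ is a $k$-conversion set of $G$ with $|S_0|=k$. Then $|V(G)-S_0|<\frac{k(k+1)-1}{k-1}$.
   Context: For a graph $G=(V,E)$, a positive integer $k$ and a set $S_0\subseteq V$, the irreversible $k$-threshold conversion process is defined by: for $t=1,2,\dots$, the set of converted vertices at time $t$ is obtained from that at time $t-1$ by adjoining all vertices having at least $k$ neighbours among the vertices converted at time $t-1$ (with $S_0$ converted at time $0$). The set $S_0$ is a $k$-conversion set of $G$ if every vertex of $G$ is eventually converted. *)

From mathcomp Require Import all_boot all_order all_algebra.
Set Implicit Arguments. Unset Strict Implicit. Unset Printing Implicit Defensive.

Definition simple_graph (T : finType) (e : rel T) : Prop :=
  symmetric e /\ irreflexive e.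

Definition nbhd (T : finType) (e : rel T) (v : T) : {set T} := [set u | e v u].

Definition regular (T : finType) (e : rel T) (r : nat) : Prop :=
  forall v : T, #|nbhd e v| = r.

Definition conv_step (T : finType) (e : rel T) (k : nat) (S : {set T}) : {set T} :=
  S :|: [set v | k <= #|nbhd e v :&: S|].

Definition converted (T : finType) (e : rel T) (k : nat) (S0 : {set T}) (t : nat)
  : {set T} := iter t (conv_step e k) S0.

Definition conversion_set (T : finType) (e : rel T) (k : nat) (S0 : {set T}) : Prop :=
  forall v : T, exists t : nat, v \in converted e k S0 t.

From mathcomp Require Import all_boot all_order all_algebra.
From mathcomp Require Import zify.
Import GRing.Theory Num.Theory.

Set Implicit Arguments.
Unset Strict Implicit.
Unset Printing Implicit Defensive.

(* Rank every vertex by its conversion time.  Every non-seed vertex has at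
   least k strictly earlier neighbours, so at least k * |V - S0| edges join
   vertices of different ranks, while the degree sum (k+1)|V| counts each of
   them twice.  A last-converted vertex has no later neighbour, which forces
   one more such edge or an edge inside its rank; hence
   (k+1)(|V - S0| + k) >= 2k |V - S0| + 2. *)

Lemma card_sum_mem (T : finType) (A : {set T}) : #|A| = \sum_u (u \in A : nat).
Proof. by rewrite -sum1_card big_mkcond. Qed.

Section RankedNeighbourhoods.

Variables (T : finType) (e : rel T) (f : T -> nat).

Definition lower_nbhd v := [set u in nbhd e v | f u < f v].
Definition level_nbhd v := [set u in nbhd e v | f u == f v].
Definition upper_nbhd v := [set u in nbhd e v | f v < f u].

Lemma card_nbhd_rank_split v :
  #|nbhd e v| = #|lower_nbhd v| + #|level_nbhd v| + #|upper_nbhd v|.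
Proof.
rewrite !card_sum_mem -!big_split; apply: eq_bigr => u _.
by rewrite !inE; case: (e v u); case: ltngtP.
Qed.

Hypothesis e_sym : symmetric e.

Lemma sum_card_lower_upper_nbhd :
  \sum_v #|lower_nbhd v| = \sum_v #|upper_nbhd v|.
Proof.
under eq_bigr do rewrite card_sum_mem.
rewrite exchange_big; apply: eq_bigr => v _; rewrite card_sum_mem.
by apply: eq_bigr => u _; rewrite !inE e_sym.
Qed.

Lemma sum_card_nbhd_rank :
  \sum_v #|nbhd e v| = 2 * \sum_v #|lower_nbhd v| + \sum_v #|level_nbhd v|.
Proof.
under eq_bigr do rewrite card_nbhd_rank_split.
by rewrite !big_split /= -sum_card_lower_upper_nbhd; lia.
Qed.

Hypothesis e_irr : irreflexive e.

Lemma sum_card_level_nbhd_ge2 v w :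
  w \in level_nbhd v -> 2 <= \sum_u #|level_nbhd u|.
Proof.
rewrite !inE => /andP [evw /eqP fwv].
have wNv : w != v by apply: contraTneq evw => ->; rewrite e_irr.
have vw : v \in level_nbhd w by rewrite !inE e_sym evw fwv eqxx.
have wv : w \in level_nbhd v by rewrite !inE evw fwv eqxx.
have [v_pos w_pos] : 0 < #|level_nbhd v| /\ 0 < #|level_nbhd w|.
  by split; rewrite card_gt0; apply/set0Pn; eexists; eassumption.
by rewrite (bigD1 v) //= (bigD1 w) //=; lia.
Qed.

Variable k : nat.
Hypothesis e_reg : regular e k.+1.

Lemma regular_rank_card_bound (U : {set T}) (vs : T) :
  {in U, forall v, k <= #|lower_nbhd v|} -> vs \in U -> (forall u, f u <= f vs) ->
  2 * k * #|U| + 2 <= k.+1 * #|T|.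
Proof.
move=> lowerU vsU vs_max.
have <- : \sum_(v : T) k.+1 = k.+1 * #|T| by rewrite sum_nat_const cardT -cardE mulnC.
under eq_bigr => v _ do rewrite -(e_reg v).
rewrite sum_card_nbhd_rank.
have upper0 : #|upper_nbhd vs| = 0.
  by apply/eqP; rewrite cards_eq0; apply/eqP/setP => u; rewrite !inE ltnNge vs_max andbF.
have deg_vs := card_nbhd_rank_split vs; rewrite e_reg upper0 addn0 in deg_vs.
have low_vs := lowerU vs vsU.
have sumU : k * #|U :\ vs| + #|lower_nbhd vs| <= \sum_v #|lower_nbhd v|.
  rewrite addnC (bigID (mem U)) /= (bigD1 vs) //= -addnA leq_add2l.
  apply: leq_trans (leq_addr _ _); rewrite mulnC -sum_nat_const.
  rewrite big_mkcond [X in _ <= X]big_mkcond /=; apply: leq_sum => v _.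
  by rewrite !inE andbC; case: ifP => // /andP [/lowerU].
have cardU := cardsD1 vs U; rewrite vsU in cardU.
have [low_gt | low_le] := ltnP k #|lower_nbhd vs|; first by nia.
have [w wvs] : exists w, w \in level_nbhd vs.
  by apply/set0Pn; rewrite -card_gt0; lia.
have := sum_card_level_nbhd_ge2 wvs; nia.
Qed.

End RankedNeighbourhoods.

Section ConversionTime.

Variables (T : finType) (e : rel T) (k : nat) (S0 : {set T}).
Hypothesis S0_conv : conversion_set e k S0.

Definition conv_time v := ex_minn (S0_conv v).

Lemma converted_conv_time v : v \in converted e k S0 (conv_time v).
Proof. by rewrite /conv_time; case: ex_minnP. Qed.

Lemma conv_time_min v t : v \in converted e k S0 t -> conv_time v <= t.
Proof. by rewrite /conv_time; case: ex_minnP => m _; apply. Qed.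

Lemma conv_time_eq0 v : (conv_time v == 0) = (v \in S0).
Proof.
apply/eqP/idP => [t0 | vS0]; first by have := converted_conv_time v; rewrite t0.
by apply/eqP; rewrite -leqn0; apply: conv_time_min.
Qed.

Lemma card_lower_nbhd_conv_time v :
  v \notin S0 -> k <= #|lower_nbhd e conv_time v|.
Proof.
rewrite -conv_time_eq0 => t_neq0; have := converted_conv_time v.
case def_t: (conv_time v) t_neq0 => [//|t] _.
rewrite /converted iterS inE => /orP [/conv_time_min | ]; first by rewrite def_t ltnn.
rewrite inE => /leq_trans -> //; apply/subset_leq_card/subsetP => u.
by rewrite !inE def_t ltnS => /andP [-> /conv_time_min].
Qed.

End ConversionTime.

Local Open Scope ring_scope.

Theorem proposition3p1 (k : nat) (T : finType) (e : rel T) (S0 : {set T}) :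
  (2 <= k)%N ->
  simple_graph e ->
  regular e k.+1 ->
  conversion_set e k S0 ->
  #|S0| = k ->
  (#|~: S0|%:R : rat) < (k * k.+1 - 1)%:R / (k - 1)%:R.
Proof.
move=> k_ge2 [e_sym e_irr] e_reg S0_conv card_S0.
rewrite ltr_pdivlMr ?ltr0n; last by lia.
rewrite -natrM ltr_nat.
have [-> | n_gt0] := posnP #|~: S0|; first by nia.
have card_T : #|T| = k + #|~: S0| by rewrite -(cardsC S0) card_S0.
pose tau := conv_time S0_conv.
have [v0 v0N] : exists v0, v0 \in ~: S0 by apply/set0Pn; rewrite -card_gt0.
have [vs _ vs_max] := @arg_maxnP T v0 xpredT tau isT.
have vsN : vs \in ~: S0.
  move: v0N; rewrite !inE -!(conv_time_eq0 S0_conv) -!lt0n => /leq_trans; apply.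
  exact: vs_max.
have lowerN : {in ~: S0, forall v, k <= #|lower_nbhd e tau v|}%N.
  by move=> v; rewrite inE => /(card_lower_nbhd_conv_time S0_conv).
have := regular_rank_card_bound e_sym e_irr e_reg lowerN vsN (fun u => vs_max u isT).
rewrite card_T; nia.
Qed.
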